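(* Let $Y$ be a real Banach space and $M$ a complete pointed metric space containing a pairly distanced sequence. Then $\mathrm{A}(M,Y)=\mathrm{Lip}_0(M,Y)$ if and only if $Y$ is finite-dimensional.
   Context: Throughout, metric spaces are complete and pointed, with base point $0$. $\mathrm{Lip}_0(M,Y)$ is the Banach space of Lipschitz maps $f:M\to Y$ with $f(0)=0$, normed by $\|f\|=\sup_{p\neq q}\|f(p)-f(q)\|/d(p,q)$. A map $f$ attains its norm toward $y\in Y$ if there is a sequence $(p_n,q_n)$ in $M\times M$ with $p_n\neq q_n$ such that $[f(p_n)-f(q_n)]/d(p_n,q_n)\to y$ and $\|y\|=\|f\|$; $\mathrm{A}(M,Y)$ is the set of $f$ attaining their norm toward some vector. A sequence $(x_n)$ of distinct points of $M$ is pairly distanced if there is a sequence $(r_n)\subseteq[0,1]$ such that for all $j\neq k$ in $\mathbb{N}$: (i) $d(x_{2j-1},x_{2k-1})\ge r_j d(x_{2j-1},x_{2j})+r_k d(x_{2k-1},x_{2k})$; (ii) $d(x_{2j-1},x_{2k})\ge r_j d(x_{2j-1},x_{2j})+(1-r_k)d(x_{2k-1},x_{2k})$; (iii) $d(x_{2j},x_{2k})\ge (1-r_j)d(x_{2j-1},x_{2j})+(1-r_k)d(x_{2k-1},x_{2k})$. *)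

From HB Require Import structures.
From mathcomp Require Import all_boot all_order all_algebra.
From mathcomp Require Import all_classical all_reals all_analysis.
Set Implicit Arguments. Unset Strict Implicit. Unset Printing Implicit Defensive.
Import Order.TTheory GRing.Theory Num.Theory.
Import numFieldNormedType.Exports.
Local Open Scope classical_set_scope.
Local Open Scope ring_scope.

Definition is_metric {R : realType} {M : Type} (d : M -> M -> R) : Prop :=
  (forall p q, 0 <= d p q) /\
  (forall p q, d p q = 0 <-> p = q) /\
  (forall p q, d p q = d q p) /\
  (forall p q s, d p s <= d p q + d q s).

Definition complete_metric {R : realType} {M : Type} (d : M -> M -> R) : Prop :=
  forall u : nat -> M,
    (forall e : R, 0 < e -> exists N : nat, forall m n : nat,
        (N <= m)%N -> (N <= n)%N -> d (u m) (u n) < e) ->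
    exists l : M, forall e : R, 0 < e -> exists N : nat, forall n : nat,
        (N <= n)%N -> d (u n) l < e.

Definition lipschitz {R : realType} {M : Type} {Y : normedModType R}
  (d : M -> M -> R) (f : M -> Y) : Prop :=
  exists C : R, forall p q, `|f p - f q| <= C * d p q.

Definition Lip0 {R : realType} {M : Type} {Y : normedModType R}
  (d : M -> M -> R) (x0 : M) (f : M -> Y) : Prop :=
  lipschitz d f /\ f x0 = 0.

Definition lipnorm {R : realType} {M : Type} {Y : normedModType R}
  (d : M -> M -> R) (f : M -> Y) : R :=
  sup [set t : R | exists p q : M, p <> q /\ t = `|f p - f q| / d p q].

Definition attains_norm_toward {R : realType} {M : Type} {Y : normedModType R}
  (d : M -> M -> R) (f : M -> Y) (y : Y) : Prop :=
  exists (p q : nat -> M),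
    (forall n, p n <> q n) /\
    ((fun n => (d (p n) (q n))^-1 *: (f (p n) - f (q n))) @ \oo --> y) /\
    `|y| = lipnorm d f.

Definition in_A {R : realType} {M : Type} {Y : normedModType R}
  (d : M -> M -> R) (f : M -> Y) : Prop :=
  exists y : Y, attains_norm_toward d f y.

(** Pairly distanced sequence. The paper's x_1, x_2, ... is [x 0, x 1, ...];
    the paper's pair (x_{2j-1}, x_{2j}), j >= 1, is (x (2j), x (2j+1)), j >= 0,
    and r_j is [r (j-1)]. *)
Definition pairly_distanced {R : realType} {M : Type} (d : M -> M -> R)
  (x : nat -> M) : Prop :=
  injective x /\
  exists r : nat -> R, (forall n, 0 <= r n <= 1) /\
    forall j k : nat, j <> k ->
      d (x j.*2) (x k.*2) >=
        r j * d (x j.*2) (x j.*2.+1) + r k * d (x k.*2) (x k.*2.+1) /\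
      d (x j.*2) (x k.*2.+1) >=
        r j * d (x j.*2) (x j.*2.+1) + (1 - r k) * d (x k.*2) (x k.*2.+1) /\
      d (x j.*2.+1) (x k.*2.+1) >=
        (1 - r j) * d (x j.*2) (x j.*2.+1) + (1 - r k) * d (x k.*2) (x k.*2.+1).

Definition finite_dim {R : realType} (Y : lmodType R) : Prop :=
  exists (n : nat) (e : 'I_n -> Y),
    forall y : Y, exists c : 'I_n -> R, y = \sum_(i < n) c i *: e i.

(* If Y is finite-dimensional, bounded sequences in Y have convergent
   subsequences, so the slopes (f p - f q) / d p q along pairs whose quotients
   tend to the Lipschitz norm of f accumulate at a vector of norm exactly that
   norm.

   If Y is infinite-dimensional, Riesz's lemma gives unit vectors e_0, e_1, ...
   with |a| <= 2 |a e_J + w| for every w spanned by e_0, ..., e_(J-1).  A pairly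
   distanced sequence carries radii rho_m such that the open balls B(x_m, rho_m)
   are pairwise disjoint and rho_(2j) + rho_(2j+1) = d(x_(2j), x_(2j+1)).  Put a
   tent of height rho_m at x_m, valued in the direction +/- (1 - 1/(j+1)) e_j for
   m = 2j, 2j+1.  The resulting map has Lipschitz norm 1, approached along the
   pairs (x_(2j), x_(2j+1)), but every slope is a e_J + b e_K with K < J,
   |b| <= 1 - 1/(K+1) and norm at most 1 - 1/(J+1); the Riesz inequality keeps
   such vectors away from the unit sphere. *)

From Pilot Require Import Defs.
From HB Require Import structures.
From mathcomp Require Import all_boot all_order all_algebra.
From mathcomp Require Import all_classical all_reals all_analysis.
From mathcomp Require Import ring lra.
Import Order.TTheory GRing.Theory Num.Theory.
Import numFieldNormedType.Exports.
Local Open Scope ring_scope.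
Local Open Scope classical_set_scope.

Lemma subrBB {V : zmodType} (y a b : V) : (y - a) - (y - b) = b - a.
Proof. by rewrite opprB addrC addrA subrK. Qed.

Section NormedSequences.
Context {R : realType} {V : normedModType R}.

Lemma increasing_seq_ge {phi : nat -> nat} : increasing_seq phi -> forall n, (n <= phi n)%N.
Proof. by move=> /increasing_seqP phiS; elim=> // n IH; exact: leq_ltn_trans IH (phiS n). Qed.

Lemma increasing_seq_comp (phi psi : nat -> nat) :
  increasing_seq phi -> increasing_seq psi -> increasing_seq (phi \o psi).
Proof. by move=> phiM psiM m n; rewrite /= phiM; exact: psiM. Qed.

Lemma cvg_subseq {u : nat -> V} {l : V} {phi : nat -> nat} :
  increasing_seq phi -> u @ \oo --> l -> u \o phi @ \oo --> l.
Proof.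
move=> /increasing_seq_ge phi_ge; apply: cvg_comp.
by move=> P [N _ PN]; exists N => // n /= Nn; apply/PN/(leq_trans Nn).
Qed.

Lemma bounded_fun_le {u : nat -> V} {B : R} : (forall n, `|u n| <= B) -> bounded_fun u.
Proof.
move=> uB; exists B; split => [|C BC n _]; first exact: num_real.
exact: le_trans (uB n) (ltW BC).
Qed.

Lemma cvg_seq_bounded_le {u : nat -> V} {l : V} : u @ \oo --> l -> exists B, forall n, `|u n| <= B.
Proof.
move=> ul; have /cvg_seq_bounded [B [_ uB]] : cvgn u by apply/cvg_ex; exists l.
by exists (B + 1) => n; apply: uB => //; rewrite ltrDl.
Qed.

Lemma cvg_norm_le {u : nat -> V} {l : V} {B : R} :
  u @ \oo --> l -> (forall n, `|u n| <= B) -> `|l| <= B.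
Proof.
move=> ul uB; rewrite leNgt; apply/negP => /(cvgr_norm_gt _ ul) [N _ /(_ N (leqnn N))].
by rewrite /= ltNge uB.
Qed.

Lemma cvg_norm_ge {u : nat -> V} {l : V} {c : R} :
  u @ \oo --> l -> (forall n, c - n.+1%:R^-1 <= `|u n|) -> c <= `|l|.
Proof.
move=> ul uc; rewrite leNgt; apply/negP => lc.
have [t lt_t t_lt] : exists2 t, `|l| < t & t < c.
  by have [] := midf_lt lc; exists ((`|l| + c) / 2).
near \oo => n.
have u_lt : `|u n| < t by near: n; exact: (cvgr_norm_lt _ ul).
have n_lt : n.+1%:R^-1 < c - t.
  by near: n; apply: (near_infty_natSinv_lt (PosNum _)); rewrite subr_gt0.
by move: (uc n) n_lt; set i := n.+1%:R^-1; lra.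
Unshelve. all: by end_near.
Qed.

End NormedSequences.

Section MetricFacts.
Context {R : realType} {M : Type} {d : M -> M -> R}.
Hypothesis hd : is_metric d.

Lemma metric_ge0 p q : 0 <= d p q. Proof. exact: hd.1. Qed.
Lemma metric_xx p : d p p = 0. Proof. exact: (hd.2.1 p p).2. Qed.
Lemma metric_sym p q : d p q = d q p. Proof. exact: hd.2.2.1. Qed.
Lemma metric_triangle p q s : d p s <= d p q + d q s. Proof. exact: hd.2.2.2. Qed.

Lemma metric_gt0 {p q} : p <> q -> 0 < d p q.
Proof. by move=> pq; rewrite lt_neqAle metric_ge0 andbT eq_sym; apply/eqP => /hd.2.1. Qed.

End MetricFacts.

Definition slope {R : realType} {M : Type} {Y : normedModType R}
  (d : M -> M -> R) (f : M -> Y) (p q : M) : Y := (d p q)^-1 *: (f p - f q).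

Definition slope_norms {R : realType} {M : Type} {Y : normedModType R}
  (d : M -> M -> R) (f : M -> Y) : set R :=
  [set t | exists p q : M, p <> q /\ t = `|f p - f q| / d p q].

Section LipschitzNorm.
Context {R : realType} {M : Type} {Y : normedModType R} {d : M -> M -> R}.
Hypothesis hd : is_metric d.

Lemma norm_slope (f : M -> Y) p q : `|slope d f p q| = `|f p - f q| / d p q.
Proof. by rewrite normrZ ger0_norm ?invr_ge0 ?metric_ge0 // mulrC. Qed.

Lemma slope_norms_ubound (f : M -> Y) C : (forall p q, `|f p - f q| <= C * d p q) ->
  ubound (slope_norms d f) C.
Proof. by move=> fC _ [p [q [pq ->]]]; rewrite ler_pdivrMr ?metric_gt0. Qed.

Lemma slope_le_lipnorm (f : M -> Y) p q : Defs.lipschitz d f -> p <> q ->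
  `|f p - f q| / d p q <= lipnorm d f.
Proof.
by move=> [C /slope_norms_ubound fC] pq; apply: ub_le_sup; [exists C | exists p, q].
Qed.

Lemma lipnorm_le (f : M -> Y) C : (exists p q : M, p <> q) ->
  (forall p q, `|f p - f q| <= C * d p q) -> lipnorm d f <= C.
Proof.
move=> [p [q pq]] /slope_norms_ubound fC.
by apply: ge_sup fC; exists (`|f p - f q| / d p q), p, q.
Qed.

Lemma lipnorm_approx (f : M -> Y) eps : Defs.lipschitz d f -> (exists p q : M, p <> q) ->
  0 < eps -> exists p q, p <> q /\ lipnorm d f - eps < `|f p - f q| / d p q.
Proof.
move=> [C /slope_norms_ubound fC] [p [q pq]] eps0.
have [|_ [p' [q' [pq' ->]]] lt] := @sup_adherent _ (slope_norms d f) _ eps0; last by exists p', q'.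
by split; [exists (`|f p - f q| / d p q), p, q | exists C].
Qed.

End LipschitzNorm.

Section Span.
Context {R : realType} {Y : normedModType R}.
Implicit Types (e : nat -> Y) (S : set Y).

Definition span e J : set Y := [set w | exists c : nat -> R, w = \sum_(i < J) c i *: e i].

Lemma eq_span e e' J : (forall i, (i < J)%N -> e i = e' i) -> span e J = span e' J.
Proof.
move=> ee'; apply/seteqP; split => _ [c ->]; exists c; apply: eq_bigr => i _;
  by rewrite ee'.
Qed.

Section SpanLemmas.
Context {e : nat -> Y} {J : nat}.

Lemma span0 : span e J 0.
Proof. by exists (fun=> 0); rewrite big1 // => i _; rewrite scale0r. Qed.

Lemma spanD {a b} : span e J a -> span e J b -> span e J (a + b).
Proof.
move=> [c ->] [c' ->]; exists (fun i => c i + c' i).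
by rewrite -big_split /=; apply: eq_bigr => i _; rewrite scalerDl.
Qed.

Lemma spanZ k {a} : span e J a -> span e J (k *: a).
Proof.
move=> [c ->]; exists (fun i => k * c i).
by rewrite scaler_sumr; apply: eq_bigr => i _; rewrite scalerA.
Qed.

Lemma spanN {a} : span e J a -> span e J (- a).
Proof. by rewrite -scaleN1r; exact: spanZ. Qed.

Lemma spanB {a b} : span e J a -> span e J b -> span e J (a - b).
Proof. by move=> Ja /spanN; exact: spanD. Qed.

Lemma spanS {w} a : span e J w -> span e J.+1 (w + a *: e J).
Proof.
move=> [c ->]; exists (fun i => if i == J then a else c i).
rewrite big_ord_recr /= eqxx; congr (_ + _).
by apply: eq_bigr => i _; rewrite ltn_eqF.
Qed.

Lemma spanSP {y} : span e J.+1 y -> exists w a, span e J w /\ y = w + a *: e J.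
Proof.
move=> [c ->]; exists (\sum_(i < J) c i *: e i), (c J).
by rewrite big_ord_recr; split => //; exists c.
Qed.

End SpanLemmas.

Lemma span_le {e J J' w} : (J <= J')%N -> span e J w -> span e J' w.
Proof.
move=> /subnK <-; elim: (J' - J)%N => // k IH /IH Jw.
by rewrite addSn; have := spanS 0 Jw; rewrite scale0r addr0.
Qed.

Lemma span_mem {e k J} : (k < J)%N -> span e J (e k).
Proof.
move=> kJ; apply: (span_le kJ).
by have := spanS 1 (@span0 e k); rewrite scale1r add0r.
Qed.

Definition seq_closed S := forall (u : nat -> Y) (l : Y),
  (forall n, S (u n)) -> u @ \oo --> l -> S l.

Definition bounded_seq_compact S := forall (u : nat -> Y) (B : R),
  (forall n, S (u n)) -> (forall n, `|u n| <= B) ->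
  exists (phi : nat -> nat) (l : Y), [/\ increasing_seq phi, S l & u \o phi @ \oo --> l].

Lemma bounded_seq_compact_closed {S} : bounded_seq_compact S -> seq_closed S.
Proof.
move=> cS u l Su ul; have [B uB] := cvg_seq_bounded_le ul.
have [phi [l' [phiI Sl' ul']]] := cS u B Su uB.
by rewrite (cvg_unique _ (cvg_subseq phiI ul) ul').
Qed.

Lemma seq_closed_dist_gt0 {S x} : seq_closed S -> ~ S x ->
  exists2 eps : R, 0 < eps & forall w, S w -> eps <= `|x - w|.
Proof.
move=> cS Sx; apply: contrapT => no_eps; apply: Sx.
have /choice [w Hw] : forall n : nat, exists w, S w /\ `|x - w| < n.+1%:R^-1.
  move=> n; apply: contrapT => no_w; apply: no_eps; exists n.+1%:R^-1 => [|w Sw].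
    by rewrite invr_gt0.
  by rewrite leNgt; apply/negP => lt; apply: no_w; exists w.
apply: (cS w) => [n|]; first exact: (Hw n).1.
apply/cvgrPdist_lt => eps eps0; near=> n; apply: lt_trans (Hw n).2 _.
by near: n; exact: (near_infty_natSinv_lt (PosNum eps0)).
Unshelve. all: by end_near.
Qed.

Lemma span_distZ {e J v eps} : (forall w, span e J w -> eps <= `|v - w|) ->
  forall a w, span e J w -> `|a| * eps <= `|w + a *: v|.
Proof.
move=> v_far a w Jw; have [->|a0] := eqVneq a 0.
  by rewrite normr0 mul0r normr_ge0.
have -> : w + a *: v = a *: (v - (- a^-1) *: w).
  by rewrite scalerBr scalerA mulrN mulfV // scaleN1r opprK addrC.
by rewrite normrZ ler_wpM2l // v_far //; exact: spanZ.
Qed.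

Lemma span_seq_decomp {e J} {u : nat -> Y} : (forall n, span e J.+1 (u n)) ->
  exists (W : nat -> Y) (A : nat -> R), forall n, span e J (W n) /\ u n = W n + A n *: e J.
Proof.
move=> Ju; have /choice [wa Hwa] : forall n, exists wa : Y * R,
    span e J wa.1 /\ u n = wa.1 + wa.2 *: e J.
  by move=> n; have [w [a [Jw ->]]] := spanSP (Ju n); exists (w, a).
by exists (fun n => (wa n).1), (fun n => (wa n).2).
Qed.

Lemma bounded_seq_compact_spanS e J :
  bounded_seq_compact (span e J) -> bounded_seq_compact (span e J.+1).
Proof.
move=> cJ; have [eJ|eJ] := pselect (span e J (e J)).
  suff -> : span e J.+1 = span e J by [].
  apply/seteqP; split => [y /spanSP [w [a [Jw ->]]]|y]; last exact: span_le.
  by apply: spanD => //; exact: spanZ.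
(* The coefficient of e J is controlled by the distance from e J to span e J. *)
have [eps eps0 eps_le] := seq_closed_dist_gt0 (bounded_seq_compact_closed cJ) eJ.
move=> u B Ju uB; have [W [A WA]] := span_seq_decomp Ju.
have A_le n : `|A n| <= B / eps.
  rewrite ler_pdivlMr // (le_trans _ (uB n)) // (WA n).2.
  exact: span_distZ eps_le _ _ (WA n).1.
have W_le n : `|W n| <= B + B / eps * `|e J|.
  have -> : W n = u n - A n *: e J by rewrite (WA n).2 addrK.
  by rewrite (le_trans (ler_normB _ _)) // normrZ lerD // ler_wpM2r.
have [phi phiI /cvg_ex [g Ag]] := bolzano_weierstrass (bounded_fun_le A_le).
have [psi [l [psiI Jl Wl]]] :=
  cJ (W \o phi) _ (fun n => (WA (phi n)).1) (fun n => W_le (phi n)).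
exists (phi \o psi), (l + g *: e J); split; [exact: increasing_seq_comp | exact: spanS |].
have -> : u \o (phi \o psi) = fun n => W (phi (psi n)) + A (phi (psi n)) *: e J.
  by apply/funext => n; rewrite /= (WA _).2.
apply: cvgD; first exact: Wl.
by apply: cvgZ; [exact: (cvg_subseq psiI Ag) | exact: cvg_cst].
Qed.

Lemma span_bounded_seq_compact e J : bounded_seq_compact (span e J).
Proof.
elim: J => [|J]; last exact: bounded_seq_compact_spanS.
move=> u B J0u _; exists id, 0; split => //; first exact: span0.
have -> : u \o id = fun=> 0 by apply/funext => n /=; case: (J0u n) => c ->; rewrite big_ord0.
exact: cvg_cst.
Qed.

End Span.

Section Riesz.
Context {R : realType} {Y : normedModType R}.
Hypothesis Y_infinite : ~ finite_dim Y.

Lemma span_proper (e : nat -> Y) J : exists x, ~ span e J x.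
Proof.
apply: contrapT => spanT; apply: Y_infinite; exists J, (fun i : 'I_J => e i) => y.
have [c ->] : span e J y by apply: contrapT => Jy; apply: spanT; exists y.
by exists (fun i : 'I_J => c i).
Qed.

Lemma riesz_span (e : nat -> Y) J :
  exists v : Y, `|v| = 1 /\ forall a w, span e J w -> `|a| <= 2 * `|a *: v + w|.
Proof.
have [x Jx] := span_proper e J.
have [eps eps0 eps_le] :=
  seq_closed_dist_gt0 (bounded_seq_compact_closed (span_bounded_seq_compact e J)) Jx.
pose D := [set `|x - w| | w in span e J].
have D0 : D !=set0 by exists `|x - 0|, 0; first exact: span0.
have D_lb : lbound D eps by move=> _ [w Jw <-]; exact: eps_le.
have delta_gt0 : 0 < inf D := lt_le_trans eps0 (lb_le_inf D0 D_lb).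
have D_inf : has_inf D by split; last exists eps.
have [_ [w0 Jw0 <-] w0_lt] := inf_adherent delta_gt0 D_inf.
(* w0 realises the distance from x to the span up to a factor 2. *)
have n0 : 0 < `|x - w0| by apply: lt_le_trans eps0 (eps_le _ Jw0).
pose v := `|x - w0|^-1 *: (x - w0).
have v_far w : span e J w -> 2^-1 <= `|v - w|.
  move=> Jw; have -> : v - w = `|x - w0|^-1 *: (x - (w0 + `|x - w0| *: w)).
    by rewrite /v opprD addrA [RHS]scalerBr scalerA mulVf ?gt_eqF // scale1r.
  rewrite normrZ ger0_norm ?invr_ge0 // mulrC ler_pdivlMr //.
  have : inf D <= `|x - (w0 + `|x - w0| *: w)|.
    apply: ge_inf; first by exists eps.
    by exists (w0 + `|x - w0| *: w) => //; apply: spanD => //; exact: spanZ.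
  by move: w0_lt; lra.
exists v; split; first by rewrite normrZ ger0_norm ?mulVf ?gt_eqF // invr_ge0 ltW.
move=> a w Jw; rewrite addrC -ler_pdivrMl // mulrC.
exact: span_distZ v_far a w Jw.
Qed.

Lemma riesz_sequence : exists e : nat -> Y, (forall n, `|e n| = 1) /\
  forall J a w, span e J w -> `|a| <= 2 * `|a *: e J + w|.
Proof.
(* e_n is chosen as a function of the list of its predecessors, so that the
   Riesz condition for e_n only involves e_0, ..., e_(n-1). *)
have /choice [next next_spec] : forall s : seq Y, exists v : Y, `|v| = 1 /\
    forall a w, span (nth 0 s) (size s) w -> `|a| <= 2 * `|a *: v + w|.
  by move=> s; exact: riesz_span.
pose fix prefix n := if n is m.+1 then rcons (prefix m) (next (prefix m)) else [::].
have size_prefix n : size (prefix n) = n by elim: n => //= n IH; rewrite size_rcons IH.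
have nth_prefix n i : (i < n)%N -> nth 0 (prefix n) i = next (prefix i).
  elim: n => // n IH; rewrite ltnS leq_eqVlt => /predU1P [->|lt] /=;
    by rewrite nth_rcons size_prefix ?ltnn ?eqxx ?lt ?IH.
exists (fun n => next (prefix n)); split => [n|J a w Jw]; first exact: (next_spec _).1.
apply: (next_spec _).2; rewrite size_prefix.
by rewrite (eq_span _ (fun i => next (prefix i))) // => i iJ; rewrite nth_prefix.
Qed.

End Riesz.

Section FiniteDimension.
Context {R : realType} {Y : normedModType R}.

Lemma finite_dim_span : finite_dim Y -> exists (e : nat -> Y) (n : nat), forall y, span e n y.
Proof.
move=> [n [e0 e0span]]; exists (fun k => oapp e0 0 (insub k : option 'I_n)), n => y.
have [c ->] := e0span y; exists (fun k => oapp c 0 (insub k : option 'I_n)).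
by apply: eq_bigr => i _; rewrite valK.
Qed.

Lemma finite_dim_lipschitz_in_A {M : Type} (d : M -> M -> R) (f : M -> Y) :
  is_metric d -> (exists p q : M, p <> q) -> finite_dim Y -> Defs.lipschitz d f -> in_A d f.
Proof.
move=> hd hM /finite_dim_span [e [n spanT]] hf.
have /choice [pq pq_spec] : forall k : nat, exists pq : M * M, pq.1 <> pq.2 /\
    lipnorm d f - k.+1%:R^-1 < `|f pq.1 - f pq.2| / d pq.1 pq.2.
  move=> k; have [|p [q [pq lt]]] := lipnorm_approx hd f (k.+1%:R^-1) hf hM.
    by rewrite invr_gt0.
  by exists (p, q).
pose z k := slope d f (pq k).1 (pq k).2.
have z_le k : `|z k| <= lipnorm d f.
  by rewrite norm_slope //; apply: slope_le_lipnorm => //; exact: (pq_spec k).1.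
have [phi [y [phiI _ zy]]] := span_bounded_seq_compact e n z _ (fun=> spanT _) z_le.
exists y, (fun k => (pq (phi k)).1), (fun k => (pq (phi k)).2).
split; [by move=> k; exact: (pq_spec _).1 | split; first exact: zy].
apply/eqP; rewrite eq_le (cvg_norm_le zy (fun k => z_le (phi k))) /=.
apply: (cvg_norm_ge zy) => k /=; rewrite norm_slope //.
apply: ltW; apply: le_lt_trans (pq_spec _).2.
by rewrite lerD2l lerN2 lef_pV2 ?posrE // ler_nat ltnS increasing_seq_ge.
Qed.

End FiniteDimension.

Lemma pairly_distanced_radii {R : realType} {M : Type} {d : M -> M -> R} {x : nat -> M} :
  is_metric d -> pairly_distanced d x ->
  exists rho : nat -> R, [/\ forall m, 0 <= rho m,
    forall j, rho j.*2 + rho j.*2.+1 = d (x j.*2) (x j.*2.+1) &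
    forall m m', m <> m' -> rho m + rho m' <= d (x m) (x m')].
Proof.
move=> hd [_ [r [r01 hr]]].
pose D j := d (x j.*2) (x j.*2.+1).
pose rho m := (if odd m then 1 - r m./2 else r m./2) * D m./2.
have rho_even j : rho j.*2 = r j * D j by rewrite /rho odd_double half_double.
have rho_odd j : rho j.*2.+1 = (1 - r j) * D j by rewrite /rho /= odd_double uphalf_double.
have even_odd j k : rho j.*2 + rho k.*2.+1 <= d (x j.*2) (x k.*2.+1).
  rewrite rho_even rho_odd; have [<-|jk] := eqVneq j k.
    by rewrite -mulrDl addrCA subrr addr0 mul1r.
  by have [_ []] := hr _ _ (elimN eqP jk).
have halves m : exists j, m = j.*2 \/ m = j.*2.+1.
  by exists m./2; rewrite -{1 3}(odd_double_half m); case: (odd m); [right | left].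
exists rho; split => [m | j | m m'].
- have /andP [r0 r1] := r01 m./2; apply: mulr_ge0; last exact: metric_ge0.
  by case: (odd m); rewrite ?subr_ge0.
- by rewrite rho_even rho_odd -mulrDl addrCA subrr addr0 mul1r.
- have [j [-> | ->]] := halves m; have [k [-> | ->]] := halves m' => mm'.
  + have jk : j <> k by move=> jk; apply: mm'; rewrite jk.
    by rewrite !rho_even; have [] := hr _ _ jk.
  + exact: even_odd.
  + by rewrite addrC (metric_sym hd); exact: even_odd.
  + have jk : j <> k by move=> jk; apply: mm'; rewrite jk.
    by rewrite !rho_odd; have [_ []] := hr _ _ jk.
Qed.

Section Construction.
Context {R : realType} {Y : normedModType R} {M : Type}.
Variables (d : M -> M -> R) (x : nat -> M) (rho : nat -> R) (e : nat -> Y).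
Hypothesis hd : is_metric d.
Hypothesis x_inj : injective x.
Hypothesis rho_ge0 : forall m, 0 <= rho m.
Hypothesis rho_pair : forall j, rho j.*2 + rho j.*2.+1 = d (x j.*2) (x j.*2.+1).
Hypothesis rho_sep : forall m m', m <> m' -> rho m + rho m' <= d (x m) (x m').
Hypothesis e_norm : forall n, `|e n| = 1.
Hypothesis e_riesz : forall J a w, span e J w -> `|a| <= 2 * `|a *: e J + w|.

Definition weight (j : nat) : R := 1 - j.+1%:R^-1.

Lemma weight_ge0 j : 0 <= weight j.
Proof. by rewrite subr_ge0 invf_le1 ?ltr0n // ler1n. Qed.

Lemma weight_lt1 j : weight j < 1.
Proof. by rewrite ltrBlDr ltrDl invr_gt0 ltr0n. Qed.

Lemma weight_le {j k} : (j <= k)%N -> weight j <= weight k.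
Proof. by move=> jk; rewrite lerD2l lerN2 lef_pV2 ?posrE ?ltr0n // ler_nat. Qed.

Lemma weight_lt_ltn {j k} : weight j < weight k -> (j < k)%N.
Proof. by move=> lt; rewrite ltnNge; apply/negP => /weight_le; rewrite leNgt lt. Qed.

Lemma weight_approx {eps} : 0 < eps -> exists j, 1 - eps < weight j.
Proof.
move=> eps0; have [j _ /(_ j (leqnn j)) /= j_lt] := near_infty_natSinv_lt (PosNum eps0).
by exists j; move: j_lt; rewrite /weight; set i := j.+1%:R^-1; lra.
Qed.

Definition tent m p := Num.max 0 (rho m - d p (x m)).

Lemma tent_ge0 m p : 0 <= tent m p.
Proof. by rewrite /tent le_max lexx. Qed.

Lemma tent_eq0 m p : tent m p = 0 <-> rho m <= d p (x m).
Proof.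
rewrite /tent -subr_le0; split => [t0|?]; last exact: max_l.
by rewrite -t0 le_max lexx orbT.
Qed.

Lemma tent_le0 m p : ~ 0 < tent m p -> tent m p = 0.
Proof. by move=> /negP; rewrite -leNgt => t0; apply/eqP; rewrite eq_le t0 tent_ge0. Qed.

Lemma tent_lip m p q : `|tent m p - tent m q| <= d p q.
Proof.
have := metric_triangle hd p q (x m); have := metric_triangle hd q p (x m).
rewrite (metric_sym hd q p) /tent ler_norml => t1 t2.
by case: (leP 0 (rho m - d p (x m))) => ?; case: (leP 0 (rho m - d q (x m))) => ?;
  apply/andP; split; lra.
Qed.

Lemma tent_at_center m : tent m (x m) = rho m.
Proof. by rewrite /tent metric_xx // subr0 max_r. Qed.

Lemma tent_at_other m m' : m <> m' -> tent m' (x m) = 0.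
Proof. by move=> /rho_sep mm'; apply/tent_eq0; have := rho_ge0 m; lra. Qed.

Lemma tent_disjoint m m' p : m <> m' -> 0 < tent m p -> tent m' p = 0.
Proof.
move=> /rho_sep mm'; rewrite /tent lt_max ltxx /= => pm; apply/tent_eq0.
by have := metric_triangle hd (x m) p (x m'); rewrite (metric_sym hd (x m) p); lra.
Qed.

Lemma tent_add_le {m m' p q} : m <> m' -> tent m' p = 0 -> tent m q = 0 ->
  tent m p + tent m' q <= d p q.
Proof.
move=> /rho_sep mm' /tent_eq0 p_out /tent_eq0 q_out.
have := metric_triangle hd q p (x m); have := metric_triangle hd p q (x m').
have := metric_triangle hd (x m) p (x m'); have := metric_ge0 hd p q.
rewrite (metric_sym hd q p) (metric_sym hd (x m) p) /tent => *.
by case: (leP 0 (rho m - d p (x m))) => ?; case: (leP 0 (rho m' - d q (x m'))) => ?; lra.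
Qed.

Definition bump m := ((-1) ^+ odd m * weight m./2) *: e m./2.

Lemma norm_bump m : `|bump m| = weight m./2.
Proof. by rewrite normrZ e_norm mulr1 normrM normr_sign mul1r ger0_norm ?weight_ge0. Qed.

Lemma norm_tent_bump m p : `|tent m p *: bump m| <= tent m p.
Proof.
rewrite normrZ norm_bump ger0_norm ?tent_ge0 //.
exact: ler_piMr (tent_ge0 m p) (ltW (weight_lt1 _)).
Qed.

(* The tents have disjoint supports: peak p is the index of the tent that is
   positive at p, and an arbitrary index when none is. *)
Definition peak p := xget 0%N [set m | 0 < tent m p].

Definition bump_sum p := tent (peak p) p *: bump (peak p).

Lemma bump_sum_eq m p :
  (forall m', m' <> m -> tent m' p = 0) -> bump_sum p = tent m p *: bump m.
Proof.
move=> p_out; rewrite /bump_sum; have [some|none] := pselect (exists m', 0 < tent m' p).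
  have /= := xgetPex 0%N some; rewrite -/(peak p).
  by have [->|/eqP pm] := eqVneq (peak p) m; last rewrite p_out // ltxx.
have p0 m' : tent m' p = 0 by apply: tent_le0 => pm'; apply: none; exists m'.
by rewrite !p0 !scale0r.
Qed.

Lemma bump_sum_form p :
  exists m, bump_sum p = tent m p *: bump m /\ forall m', m' <> m -> tent m' p = 0.
Proof.
suff [m p_out] : exists m, forall m', m' <> m -> tent m' p = 0.
  by exists m; split => //; exact: bump_sum_eq.
have [[m pm]|none] := pselect (exists m, 0 < tent m p).
  by exists m => m' /nesym mm'; exact: tent_disjoint mm' pm.
by exists 0%N => m' _; apply: tent_le0 => pm'; apply: none; exists m'.
Qed.

Lemma bump_sum_at m : bump_sum (x m) = rho m *: bump m.
Proof. by rewrite (bump_sum_eq m) ?tent_at_center // => m' /nesym; exact: tent_at_other. Qed.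

Lemma bump_sum_pair j :
  bump_sum (x j.*2) - bump_sum (x j.*2.+1) = (d (x j.*2) (x j.*2.+1) * weight j) *: e j.
Proof.
rewrite !bump_sum_at /bump -rho_pair /= odd_double half_double uphalf_double.
by rewrite !scalerA -scalerBl; congr (_ *: _); ring.
Qed.

Lemma bump_sum_lip p q : `|bump_sum p - bump_sum q| <= d p q.
Proof.
have [m [-> p_out]] := bump_sum_form p; have [m' [-> q_out]] := bump_sum_form q.
have [<-|/eqP mm'] := eqVneq m m'.
  rewrite -scalerBl normrZ norm_bump (le_trans _ (tent_lip m p q)) //.
  exact: ler_piMr (normr_ge0 _) (ltW (weight_lt1 _)).
apply: le_trans _ (tent_add_le mm' (p_out _ (nesym mm')) (q_out _ mm')).
exact: le_trans (ler_normB _ _) (lerD (norm_tent_bump m p) (norm_tent_bump m' q)).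
Qed.

Lemma bump_sum_lipschitz : Defs.lipschitz d bump_sum.
Proof. by exists 1 => p q; rewrite mul1r bump_sum_lip. Qed.

Lemma x_pair_neq j : x j.*2 <> x j.*2.+1.
Proof. by move/x_inj/(congr1 odd); rewrite /= odd_double. Qed.

Lemma bump_sum_pair_slope j :
  `|bump_sum (x j.*2) - bump_sum (x j.*2.+1)| / d (x j.*2) (x j.*2.+1) = weight j.
Proof.
have d_gt0 := metric_gt0 hd (x_pair_neq j).
rewrite bump_sum_pair normrZ e_norm mulr1 normrM !ger0_norm ?weight_ge0 ?metric_ge0 //.
by rewrite mulrAC mulfV ?mul1r ?gt_eqF.
Qed.

Lemma lipnorm_bump_sum : lipnorm d bump_sum = 1.
Proof.
have pair : exists p q : M, p <> q by exists (x 0%N), (x 1%N); exact: (x_pair_neq 0).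
apply/eqP; rewrite eq_le lipnorm_le // => [|p q]; last by rewrite mul1r bump_sum_lip.
apply/ler_addgt0Pr => eps eps0; have [j j_gt] := weight_approx eps0.
have := slope_le_lipnorm hd _ _ _ bump_sum_lipschitz (x_pair_neq j).
by rewrite bump_sum_pair_slope; lra.
Qed.

Definition shaped (z : Y) := exists J K (a b : R), [/\ (K < J)%N \/ b = 0,
  z = a *: e J + b *: e K, `|b| <= weight K & `|z| <= weight J].

Lemma norm_weighted c i : `|(c * weight i) *: e i| = `|c| * weight i.
Proof. by rewrite normrZ e_norm mulr1 normrM (ger0_norm (weight_ge0 i)). Qed.

Lemma shaped_pair j k (c1 c2 : R) : `|c1| + `|c2| <= 1 ->
  shaped ((c1 * weight j) *: e j + (c2 * weight k) *: e k).
Proof.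
move=> c12; have c1_ge0 := normr_ge0 c1; have c2_ge0 := normr_ge0 c2.
have wj_ge0 := weight_ge0 j; have wk_ge0 := weight_ge0 k.
have z_le := ler_normD ((c1 * weight j) *: e j) ((c2 * weight k) *: e k).
rewrite !norm_weighted in z_le.
case: (ltngtP j k) => [jk|kj|<-].
- have wjk := weight_le (ltnW jk).
  exists k, j, (c2 * weight k), (c1 * weight j); rewrite addrC; split; first by left.
  + by [].
  + by rewrite normrM (ger0_norm wj_ge0); nra.
  + by rewrite addrC; apply: le_trans z_le _; nra.
- have wkj := weight_le (ltnW kj).
  exists j, k, (c1 * weight j), (c2 * weight k); split; first by left.
  + by [].
  + by rewrite normrM (ger0_norm wk_ge0); nra.
  + by apply: le_trans z_le _; nra.
- exists j, j, ((c1 + c2) * weight j), 0; split; first by right.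
  + by rewrite scale0r addr0 -scalerDl mulrDl.
  + by rewrite normr0.
  + by rewrite -scalerDl -mulrDl norm_weighted; have := ler_normD c1 c2; nra.
Qed.

Lemma slope_bump_sum_shaped p q : p <> q -> shaped (slope d bump_sum p q).
Proof.
move=> pq; have d_gt0 := metric_gt0 hd pq; rewrite /slope.
have di_ge0 : 0 <= (d p q)^-1 by rewrite invr_ge0 ltW.
have [m [-> p_out]] := bump_sum_form p; have [m' [-> q_out]] := bump_sum_form q.
have [<-|/eqP mm'] := eqVneq m m'.
  have -> : (d p q)^-1 *: (tent m p *: bump m - tent m q *: bump m) =
      (((d p q)^-1 * (tent m p - tent m q) * (-1) ^+ odd m) * weight m./2) *: e m./2 +
      (0 * weight m./2) *: e m./2.
    by rewrite mul0r scale0r addr0 -scalerBl /bump !scalerA; congr (_ *: _); ring.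
  apply: shaped_pair; rewrite normr0 addr0 !normrM normr_sign mulr1 (ger0_norm di_ge0).
  by rewrite mulrC ler_pdivrMr // mul1r; exact: tent_lip.
have -> : (d p q)^-1 *: (tent m p *: bump m - tent m' q *: bump m') =
    (((d p q)^-1 * tent m p * (-1) ^+ odd m) * weight m./2) *: e m./2 +
    ((- ((d p q)^-1 * tent m' q) * (-1) ^+ odd m') * weight m'./2) *: e m'./2.
  by rewrite /bump scalerBr !scalerA -scaleNr; congr (_ *: _ + _ *: _); ring.
apply: shaped_pair; rewrite !normrM !normr_sign !mulr1 normrN normrM (ger0_norm di_ge0).
rewrite !ger0_norm ?tent_ge0 //.
rewrite -mulrDr mulrC ler_pdivrMr // mul1r.
exact: tent_add_le mm' (p_out _ (nesym mm')) (q_out _ mm').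
Qed.

Lemma shaped_span J K J' a b : (K < J)%N \/ b = 0 -> (J < J')%N ->
  span e J' (a *: e J + b *: e K).
Proof.
move=> KJ JJ'; apply: spanD; first exact/spanZ/span_mem.
case: KJ => [KJ|->]; last by rewrite scale0r; exact: span0.
exact/spanZ/span_mem/(ltn_trans KJ).
Qed.

Section ShapedLimit.
Variable y : Y.
Hypothesis y_norm : `|y| = 1.
Hypothesis y_lim : forall del, 0 < del -> exists2 z, shaped z & `|y - z| < del.

Lemma shaped_approx_beyond N {et} : 0 < et -> exists J K a b,
  [/\ `|y - (a *: e J + b *: e K)| < et, (N < J)%N, (K < J)%N \/ b = 0 & `|b| <= weight K].
Proof.
move=> et0; have [|z [J [K [a [b [KJ z_eq bK zJ]]]]] yz] := y_lim (Num.min et (1 - weight N)).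
  by rewrite lt_min et0 subr_gt0 weight_lt1.
exists J, K, a, b; rewrite -z_eq; split => //.
  by apply: lt_le_trans yz _; rewrite ge_min lexx.
apply: weight_lt_ltn; have : `|y - z| < 1 - weight N.
  by apply: lt_le_trans yz _; rewrite ge_min lexx orbT.
by have := ler_normD (y - z) z; rewrite subrK y_norm; lra.
Qed.

Lemma shaped_approx_single {et} : 0 < et ->
  exists K b, `|b| <= weight K /\ `|y - b *: e K| < 5 * et.
Proof.
move=> et0; have [J1 [K1 [a1 [b1 [yz1 _ K1J1 _]]]]] := shaped_approx_beyond 0 et0.
have [J2 [K2 [a2 [b2 [yz2 J1J2 K2J2 b2K2]]]]] := shaped_approx_beyond J1 et0.
exists K2, b2; split => //.
have J2w : span e J2 (b2 *: e K2 - (a1 *: e J1 + b1 *: e K1)).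
  apply: spanB; last exact: shaped_span.
  by case: K2J2 => [K2J2|->]; [exact/spanZ/span_mem | rewrite scale0r; exact: span0].
move: (b2 *: e K2) (a1 *: e J1 + b1 *: e K1) J2w yz1 yz2 => z2 z1 J2w yz1 yz2.
have := e_riesz _ a2 _ J2w; rewrite addrA -(subrBB y).
have := ler_normB (y - z1) (y - (a2 *: e J2 + z2)).
have -> : y - z2 = (y - (a2 *: e J2 + z2)) + a2 *: e J2.
  by rewrite opprD addrA addrAC subrK.
have := ler_normD (y - (a2 *: e J2 + z2)) (a2 *: e J2); rewrite normrZ e_norm mulr1.
by move: yz1 yz2; lra.
Qed.

Lemma unit_not_shaped_limit : False.
Proof.
have [|K1 [b1 [_ yb1]]] := @shaped_approx_single (1 / 100); first exact: divr_gt0.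
have et0 : 0 < (1 - weight K1) / 100 by apply: divr_gt0; rewrite // subr_gt0 weight_lt1.
have [K2 [b2 [b2K2 yb2]]] := shaped_approx_single et0.
have := weight_ge0 K1; have := ler_normD (y - b2 *: e K2) (b2 *: e K2).
rewrite subrK y_norm normrZ e_norm mulr1 => b2_big ?.
have K12 : (K1 < K2)%N by apply: weight_lt_ltn; lra.
have := e_riesz _ b2 _ (spanN (spanZ b1 (span_mem K12))).
rewrite -(subrBB y).
have := ler_normB (y - b1 *: e K1) (y - b2 *: e K2).
by move: yb1 yb2 b2_big; lra.
Qed.

End ShapedLimit.

Lemma bump_sum_not_in_A : ~ in_A d bump_sum.
Proof.
move=> [y [p [q [pq [pqy y_norm]]]]].
apply: (@unit_not_shaped_limit y); first by rewrite y_norm lipnorm_bump_sum.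
move=> del del0; have [N _ /(_ N (leqnn N)) /= yN] := cvgr_dist_lt _ _ pqy _ del0.
by exists (slope d bump_sum (p N) (q N)); first exact: slope_bump_sum_shaped.
Qed.

End Construction.

Lemma in_A_subr {R : realType} {M : Type} {Y : normedModType R} (d : M -> M -> R)
    (f : M -> Y) (c : Y) :
  in_A d (fun p => f p - c) -> in_A d f.
Proof.
have fc p q : f p - c - (f q - c) = f p - f q by rewrite opprB addrA subrK.
move=> [y [p [q [pq [pqy y_norm]]]]]; exists y, p, q; split => //; split.
  by move: pqy; under eq_fun do rewrite fc.
rewrite y_norm /lipnorm; congr sup; apply/seteqP.
by split => _ [p' [q' [pq' ->]]]; exists p', q'; rewrite fc.
Qed.

Lemma not_finite_dim_not_in_A {R : realType} {Y : normedModType R} {M : Type}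
    {d : M -> M -> R} (x0 : M) :
  is_metric d -> (exists x : nat -> M, pairly_distanced d x) -> ~ finite_dim Y ->
  exists f : M -> Y, Lip0 d x0 f /\ ~ in_A d f.
Proof.
move=> hd [x x_pd] Y_inf.
have [rho [rho_ge0 rho_pair rho_sep]] := pairly_distanced_radii hd x_pd.
have [e [e_norm e_riesz]] := riesz_sequence Y_inf.
pose f := bump_sum d x rho e.
exists (fun p => f p - f x0); split; last first.
  by move/in_A_subr; exact: bump_sum_not_in_A x_pd.1 rho_ge0 rho_pair rho_sep e_norm e_riesz.
split; last exact: subrr.
by exists 1 => p q; rewrite opprB addrA subrK mul1r; exact: bump_sum_lip.
Qed.

Theorem theorem2p7 (R : realType) (Y : completeNormedModType R)
  (M : Type) (d : M -> M -> R) (x0 : M)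
  (hd : is_metric d) (hcomplete : complete_metric d)
  (hpd : exists x : nat -> M, pairly_distanced d x) :
  (forall f : M -> Y, Lip0 d x0 f -> in_A d f) <-> finite_dim Y.
Proof.
split=> [attains | Y_fin f [f_lip _]].
  apply: contrapT => Y_inf; have [f [f_lip f_notA]] := not_finite_dim_not_in_A x0 hd hpd Y_inf.
  exact: f_notA (attains f f_lip).
have [x [x_inj _]] := hpd.
apply: finite_dim_lipschitz_in_A hd _ Y_fin f_lip.
by exists (x 0%N), (x 1%N) => /x_inj.
Qed.
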